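(* Let $g:\mathbb{R}^d\times\mathbb{R}^d\to\mathbb{R}^d$ and $R>0$ satisfy: (i) there exists $L_{g,R}\ge0$ such that $\|g(x,z_1)-g(x,z_2)\|\le L_{g,R}\|z_1-z_2\|$ for all $z_1,z_2,x\in\mathbb{R}^d$ with $\|x\|\le R$; (ii) there exist $C_{R,0},C_{R,1}\ge0$ such that $\|g(x,z)\|\le C_{R,0}+C_{R,1}\|z\|$ for all $x,z$ with $\|x\|\le R$. Let $b\in\mathbb{R}$ with $|b|>C_{R,1}$ and $f^g(x,z)=bz+g(x,z)$, $f^g_x=f^g(x,\cdot)$. Then for every $M>0$, with $\tilde M=(M+C_{R,0})/(|b|-C_{R,1})$: there exists $L\ge0$ such that $f^g_x$ is $L$-Lipschitz for every $x\in B(0,R)$, and $B(0,M)\subset f^g_x(B(0,\tilde M))$ for every $x\in B(0,R)$.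
   Context: $B(x,r)$ denotes the Euclidean ball centered at $x$ of radius $r$. *)

From HB Require Import structures.
From mathcomp Require Import all_boot all_order all_algebra.
From mathcomp Require Import reals.
Set Implicit Arguments. Unset Strict Implicit. Unset Printing Implicit Defensive.
Import Order.TTheory GRing.Theory Num.Theory.
Local Open Scope ring_scope.

Definition enorm (R : realType) (d : nat) (v : 'rV[R]_d) : R :=
  Num.sqrt (\sum_(i < d) (v ord0 i) ^+ 2).

Definition eball (R : realType) (d : nat) (c : 'rV[R]_d) (r : R) : 'rV[R]_d -> Prop :=
  fun v => enorm (v - c) < r.

Definition lipschitz_with (R : realType) (d : nat) (L : R) (h : 'rV[R]_d -> 'rV[R]_d) : Prop :=
  forall z1 z2, enorm (h z1 - h z2) <= L * enorm (z1 - z2).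

Definition fg (R : realType) (d : nat) (b : R) (g : 'rV[R]_d -> 'rV[R]_d -> 'rV[R]_d)
  (x z : 'rV[R]_d) : 'rV[R]_d := b *: z + g x z.

(* For fixed x, f_x is Lipschitz with constant |b| + L_{g,R}.  Given |y| < M,
   put rho = (|y| + C_{R,0}) / (|b| - C_{R,1}) < M~: the growth bound makes
   T w = b^-1 (y - g(x, w)) map the closed ball of radius rho into itself, and
   a fixed point of T is a preimage of y in that ball.  It exists by Brouwer's
   theorem, applied to T composed with the radial retraction onto the ball.

   Brouwer's theorem for Lipschitz maps of a cube is proved from Kuhn's
   combinatorial lemma: on Kuhn's triangulation, doors (facets carrying all
   nonzero labels) are paired by moving inside a simplex and by crossing a
   facet; only one door lies on the boundary, so a parity count yields a fully
   labelled simplex.  For Sperner labels recording which coordinates F moves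
   down, such simplices give approximate fixed points on finer and finer
   grids, and compactness turns them into a fixed point. *)

From HB Require Import structures.
From mathcomp Require Import all_boot all_order all_algebra all_fingroup.
From mathcomp Require Import all_classical all_reals all_analysis.
From mathcomp Require Import zify ring lra.

Set Implicit Arguments. Unset Strict Implicit. Unset Printing Implicit Defensive.
Import Order.TTheory GRing.Theory Num.Theory.
Import numFieldNormedType.Exports.

(** * Kuhn's combinatorial lemma *)

Lemma involution_card_even (T : finType) (A : {set T}) (f : T -> T) :
  {in A, forall x, [/\ f x \in A, f (f x) = x & f x != x]} -> ~~ odd #|A|.
Proof.
elim: {A}#|A| {-2}A (leqnn #|A|) => [|N IH] A leAN fA.
  by move: leAN; rewrite leqn0 => /eqP ->.
have [->|[x xA]] := set_0Vmem A; first by rewrite cards0.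
have [fxA ffx fxx] := fA x xA.
have sub_xfx : [set x; f x] \subset A.
  by apply/fintype.subsetP => y; rewrite !inE => /orP[]/eqP->.
have cardA : #|A| = #|A :\: [set x; f x]| + 2.
  by rewrite -(cardsID [set x; f x] A) (finset.setIidPr sub_xfx) cards2 eq_sym fxx addnC.
rewrite cardA oddD addbF; apply: IH; first by move: leAN; rewrite cardA; lia.
move=> y; rewrite !inE => /andP[yx yA].
have [fyA ffy fyy] := fA y yA.
rewrite fyA ffy fyy andbT; split=> //.
by apply: contra yx => /orP[]/eqP fy; rewrite -ffy fy ?ffx eqxx ?orbT.
Qed.

Lemma neq_val (N : nat) (a b : 'I_N) : a != b -> (a : nat) <> b.
Proof. by move=> /eqP ab /val_inj. Qed.

Lemma perm_decr_rev (N : nat) (t : {perm 'I_N}) :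
  (forall i j : 'I_N, i < j -> t j < t i) -> forall i, t i = rev_ord i.
Proof.
move=> decr.
have lower m (i : 'I_N) : N - 1 - i = m -> m <= t i.
  elim: m i => [//|m IH] i e.
  have lt : i.+1 < N by lia.
  have := IH (Ordinal lt) ltac:(rewrite /=; lia).
  have := decr i (Ordinal lt) (ltnSn i); lia.
have upper m (i : 'I_N) : (i : nat) = m -> t i <= N - 1 - m.
  elim: m i => [|m IH] i e; first by have := ltn_ord (t i); lia.
  have lt : m < N by have := ltn_ord i; lia.
  have := IH (Ordinal lt) erefl.
  have := decr (Ordinal lt) i ltac:(rewrite /=; lia); lia.
move=> i; apply: val_inj => /=.
have := lower _ i erefl; have := upper _ i erefl; have := ltn_ord i; lia.
Qed.

Section Kuhn.
Variables (n k : nat).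
Local Notation grid := {ffun 'I_n.+1 -> nat}.
Local Notation base := {ffun 'I_n.+1 -> 'I_k.+1}.
Local Notation perm_n := {perm 'I_n.+1}.
(* Sperner's boundary conditions on the grid [0, k+1]^(n+1); the label
   [lift ord0 i] is attached to coordinate [i]. *)
Variable lab : grid -> 'I_n.+2.
Hypothesis lab_bottom : forall (p : grid) i, p i = 0 -> lab p != lift ord0 i.
Hypothesis lab_top : forall (p : grid) i, p i = k.+1 ->
  (forall i' : 'I_n.+1, i' < i -> p i' != k.+1) -> lab p = lift ord0 i.

(* Kuhn's triangulation of the cube: the simplex [(v, t)] has vertices
   [vertex v t m], obtained from [v] by adding 1 to the coordinates [i] with
   [t i < m].  A facet [(v, t, j)] is the face of [(v, t)] opposite to vertex
   [j]; it is a door if it carries every nonzero label. *)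
Definition vertex (v : base) (t : perm_n) (m : 'I_n.+2) : grid :=
  [ffun i => v i + (t i < m)].
Local Notation facet := (base * perm_n * 'I_n.+2)%type.
Definition vlabel (x : facet) (m : 'I_n.+2) := lab (vertex x.1.1 x.1.2 m).
Definition is_door (x : facet) := [forall c : 'I_n.+2, (c != ord0) ==>
   [exists m : 'I_n.+2, (m != x.2) && (vlabel x m == c)]].
Definition doors := [set x : facet | is_door x].
Definition fully_labelled (x : facet) :=
  [forall c : 'I_n.+2, [exists m : 'I_n.+2, vlabel x m == c]].

Lemma is_doorP (x : facet) :
  reflect (forall c, c != ord0 -> exists2 m, m != x.2 & vlabel x m = c) (is_door x).
Proof.
apply: (iffP forallP) => [h c c0|h c]; last first.
  by apply/implyP => c0; have [m m1 m2] := h c c0; apply/existsP; exists m; rewrite m1 m2 eqxx.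
by have /existsP[m /andP[m1 /eqP m2]] := implyP (h c) c0; exists m.
Qed.

Lemma door_vlabel_inj (x : facet) :
  x \in doors -> {in [set m | m != x.2] &, injective (vlabel x)}.
Proof.
rewrite inE => /is_doorP cov; apply/imset_injP.
have -> : [set m | m != x.2] = [set~ x.2] by apply/setP => m; rewrite !inE.
rewrite eqn_leq leq_imset_card /= cardsC1 card_ord /=.
apply: (@leq_trans #|[set~ (ord0 : 'I_n.+2)]|); first by rewrite cardsC1 card_ord.
apply: subset_leq_card; apply/fintype.subsetP => c; rewrite !inE => c0.
by have [m m1 m2] := cov c c0; rewrite -m2; apply: imset_f; rewrite !inE.
Qed.

(* Inside a simplex that is not fully labelled, a door omits a vertex whose
   label is repeated exactly once on the door; [switch] omits the other one. *)
Definition switch (x : facet) : facet :=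
  (x.1, odflt x.2 [pick m | (m != x.2) && (vlabel x m == vlabel x x.2)]).

Lemma switch_involution (x : facet) : x \in doors -> ~~ fully_labelled x ->
  [/\ switch x \in doors, switch (switch x) = x & switch x != x].
Proof.
move=> xD nf; have inj := door_vlabel_inj xD; move: (xD); rewrite inE => /is_doorP cov.
have l0 : vlabel x x.2 != ord0.
  apply/negP => /eqP h; move/negP: nf; apply; apply/forallP => c; apply/existsP.
  case: (eqVneq c ord0) => [->|cn]; first by exists x.2; rewrite h.
  by have [m _ hm] := cov c cn; exists m; rewrite hm.
have [m hmj hm] := cov _ l0.
case: x xD nf inj cov l0 m hmj hm => [[v t] j] /= xD nf inj cov l0 m hmj hm.
rewrite /switch /=; case: pickP => [m0 /andP[m0j /eqP hm0] | none]; last first.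
  by have := none m; rewrite hmj hm eqxx.
rewrite /=; split.
- rewrite inE; apply/is_doorP => c c0 /=.
  case: (eqVneq c (vlabel (v, t, j) j)) => [->|cn].
    by exists j; rewrite // eq_sym.
  have [m' m'j hm'] := cov c c0; exists m' => //.
  by apply/eqP => e; move: hm'; rewrite e hm0 => /esym/eqP; rewrite (negbTE cn).
- case: pickP => [m1 /andP[m1m0 /eqP hm1] | none2] /=.
    case: (eqVneq m1 j) => [->//|m1j].
    have := inj m1 m0; rewrite !inE m1j m0j => /(_ isT isT).
    by rewrite /vlabel /= in hm1 hm0 *; rewrite hm1 => /(_ erefl) e; move: m1m0; rewrite e eqxx.
  have := none2 j; rewrite eq_sym m0j /=.
  by rewrite /vlabel /= in hm0 *; rewrite hm0 eqxx.
- by apply/negP => /eqP [] /eqP; rewrite (negbTE m0j).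
Qed.

Lemma door_of_shared_facet (x x' : facet) : x \in doors ->
  (forall m, m != x.2 -> exists2 m', m' != x'.2 &
     vertex x'.1.1 x'.1.2 m' = vertex x.1.1 x.1.2 m) ->
  x' \in doors.
Proof.
rewrite !inE => /is_doorP cov h; apply/is_doorP => c c0.
have [m m1 m2] := cov c c0; have [m' m'1 m'2] := h m m1.
by exists m' => //; rewrite /vlabel m'2.
Qed.

Definition first_step (t : perm_n) : 'I_n.+1 := (t^-1)%g ord0.
Definition last_step (t : perm_n) : 'I_n.+1 := (t^-1)%g ord_max.

Lemma eq_first_step (t : perm_n) i : (t i == ord0) = (i == first_step t).
Proof. by rewrite /first_step; apply/eqP/eqP => [<-|->]; [rewrite permK | rewrite permKV]. Qed.

Lemma eq_last_step (t : perm_n) i : (t i == ord_max) = (i == last_step t).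
Proof. by rewrite /last_step; apply/eqP/eqP => [<-|->]; [rewrite permK | rewrite permKV]. Qed.

Definition rotl_fun (t : perm_n) (i : 'I_n.+1) : 'I_n.+1 :=
  if i == first_step t then ord_max else inord (t i).-1.
Definition rotr_fun (t : perm_n) (i : 'I_n.+1) : 'I_n.+1 :=
  if i == last_step t then ord0 else inord (t i).+1.

Lemma rotl_fun_inj (t : perm_n) : injective (rotl_fun t).
Proof.
move=> i1 i2; rewrite /rotl_fun.
have h1 : ((t i1 : nat) == 0) = (i1 == first_step t) by rewrite -eq_first_step.
have h2 : ((t i2 : nat) == 0) = (i2 == first_step t) by rewrite -eq_first_step.
have l1 := ltn_ord (t i1); have l2 := ltn_ord (t i2).
case: (i1 =P first_step t) h1 => e1 h1; case: (i2 =P first_step t) h2 => e2 h2;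
  rewrite ?e1 ?e2 //.
- move/negbT/eqP: h2 => h2; move/(congr1 val); rewrite /= inordK; lia.
- move/negbT/eqP: h1 => h1; move/(congr1 val); rewrite /= inordK; lia.
- move/negbT/eqP: h1 => h1; move/negbT/eqP: h2 => h2.
  move/(congr1 val); rewrite /= !inordK; try lia.
  by move=> e; apply: (@perm_inj _ t); apply: val_inj; rewrite /=; lia.
Qed.

Lemma rotr_fun_inj (t : perm_n) : injective (rotr_fun t).
Proof.
move=> i1 i2; rewrite /rotr_fun.
have h1 : ((t i1 : nat) == n) = (i1 == last_step t) by rewrite -eq_last_step.
have h2 : ((t i2 : nat) == n) = (i2 == last_step t) by rewrite -eq_last_step.
have l1 := ltn_ord (t i1); have l2 := ltn_ord (t i2).
case: (i1 =P last_step t) h1 => e1 h1; case: (i2 =P last_step t) h2 => e2 h2;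
  rewrite ?e1 ?e2 //.
- move/negbT/eqP: h2 => h2; move/(congr1 val); rewrite /= inordK; lia.
- move/negbT/eqP: h1 => h1; move/(congr1 val); rewrite /= inordK; lia.
- move/negbT/eqP: h1 => h1; move/negbT/eqP: h2 => h2.
  move/(congr1 val); rewrite /= !inordK; try lia.
  by move=> e; apply: (@perm_inj _ t); apply: val_inj; rewrite /=; lia.
Qed.

Definition rotl (t : perm_n) : perm_n := perm (@rotl_fun_inj t).
Definition rotr (t : perm_n) : perm_n := perm (@rotr_fun_inj t).

Lemma last_step_rotl (t : perm_n) : last_step (rotl t) = first_step t.
Proof. by apply/eqP; rewrite eq_sym -eq_last_step permE /rotl_fun eqxx. Qed.

Lemma first_step_rotr (t : perm_n) : first_step (rotr t) = last_step t.
Proof. by apply/eqP; rewrite eq_sym -eq_first_step permE /rotr_fun eqxx. Qed.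

Lemma rotlK : cancel rotl rotr.
Proof.
move=> t; apply/perm.permP => i; rewrite permE /rotr_fun last_step_rotl.
case: (i =P first_step t) => e; first by rewrite e /first_step permKV.
rewrite permE /rotl_fun; move/eqP/negbTE: (e) => ->.
have h1 : ((t i : nat) == 0) = (i == first_step t) by rewrite -eq_first_step.
move/eqP/negbTE: e; rewrite -h1 => /negbT/eqP h.
have li := ltn_ord (t i).
by apply: val_inj; rewrite /= !inordK; lia.
Qed.

Lemma rotrK : cancel rotr rotl.
Proof.
move=> t; apply/perm.permP => i; rewrite permE /rotl_fun first_step_rotr.
case: (i =P last_step t) => e; first by rewrite e /last_step permKV.
rewrite permE /rotr_fun; move/eqP/negbTE: (e) => ->.
have h1 : ((t i : nat) == n) = (i == last_step t) by rewrite -eq_last_step.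
move/eqP/negbTE: e; rewrite -h1 => /negbT/eqP h.
have li := ltn_ord (t i).
by apply: val_inj; rewrite /= !inordK; lia.
Qed.

Definition incr_at (v : base) (a : 'I_n.+1) : base :=
  [ffun i => if i == a then inord (v i).+1 else v i].
Definition decr_at (v : base) (a : 'I_n.+1) : base :=
  [ffun i => if i == a then inord (v i).-1 else v i].

Lemma incr_atK (v : base) (a : 'I_n.+1) : v a < k -> decr_at (incr_at v a) a = v.
Proof.
move=> h; apply/ffunP => i; rewrite !ffunE; case: eqP => [->|] //.
by apply: val_inj; rewrite /= !inordK; lia.
Qed.

Lemma decr_atK (v : base) (a : 'I_n.+1) : 0 < v a -> incr_at (decr_at v a) a = v.
Proof.
move=> h; have := ltn_ord (v a) => h'.
apply/ffunP => i; rewrite !ffunE; case: eqP => [->|] //.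
by apply: val_inj; rewrite /= !inordK; lia.
Qed.

Definition adj_tperm (j : 'I_n.+2) : perm_n := tperm (inord j.-1) (inord j).

Lemma vertex_mul_adj_tperm (v : base) (t : perm_n) (j m : 'I_n.+2) :
  j != ord0 -> j != ord_max -> m != j -> vertex v (t * adj_tperm j)%g m = vertex v t m.
Proof.
move=> /neq_val j0 /neq_val jm /neq_val mj; rewrite /= in j0 jm.
have lj := ltn_ord j.
apply/ffunP => i; rewrite !ffunE permM /adj_tperm.
case: tpermP => [h|h|h1 h2]; rewrite ?h //.
- rewrite !inordK; try lia; congr (_ + nat_of_bool _); apply/idP/idP; lia.
- rewrite !inordK; try lia; congr (_ + nat_of_bool _); apply/idP/idP; lia.
Qed.

Lemma vertex_rotl (v : base) (t : perm_n) (m : 'I_n.+2) :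
  v (first_step t) < k -> m != ord0 ->
  vertex (incr_at v (first_step t)) (rotl t) (inord m.-1) = vertex v t m.
Proof.
move=> vk /neq_val m0; rewrite /= in m0; have lm := ltn_ord m.
apply/ffunP => i; rewrite !ffunE permE /rotl_fun.
have h1 : ((t i : nat) == 0) = (i == first_step t) by rewrite -eq_first_step.
have li := ltn_ord (t i); have lv := ltn_ord (v i).
case: (i =P first_step t) h1 => e h1.
- by move/eqP: h1 => h1; rewrite -e in vk; rewrite /= !inordK; try lia.
- move/negbT/eqP: h1 => h1; rewrite /= !inordK; try lia.
  all: try (congr (_ + nat_of_bool _); apply/idP/idP; lia).
Qed.

Lemma vertex_rotr (v : base) (t : perm_n) (m : 'I_n.+2) :
  0 < v (last_step t) -> m != ord_max ->
  vertex (decr_at v (last_step t)) (rotr t) (inord m.+1) = vertex v t m.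
Proof.
move=> vk /neq_val m0; rewrite /= in m0; have lm := ltn_ord m.
apply/ffunP => i; rewrite !ffunE permE /rotr_fun.
have h1 : ((t i : nat) == n) = (i == last_step t) by rewrite -eq_last_step.
have li := ltn_ord (t i); have lv := ltn_ord (v i).
case: (i =P last_step t) h1 => e h1.
- move/eqP: h1 => h1; rewrite -e in vk; rewrite /= !inordK; try lia.
- move/negbT/eqP: h1 => h1; rewrite /= !inordK; try lia.
  all: try (congr (_ + nat_of_bool _); apply/idP/idP; lia).
Qed.

(* The simplex on the other side of the facet: through a facet of the cube
   boundary there is none, and [pivot] is then the identity. *)
Definition pivot (x : facet) : facet :=
  let: (v, t, j) := x in
  if j == ord0 then
    (if v (first_step t) < k then (incr_at v (first_step t), rotl t, ord_max) else x)
  else if j == ord_max then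
    (if 0 < v (last_step t) then (decr_at v (last_step t), rotr t, ord0) else x)
  else (v, (t * adj_tperm j)%g, j).

Definition pivotable (x : facet) :=
  ((x.2 == ord0) ==> (x.1.1 (first_step x.1.2) < k)) &&
  ((x.2 == ord_max) ==> (0 < x.1.1 (last_step x.1.2))).

Lemma pivot_involution (x : facet) : pivotable x ->
  [/\ pivot (pivot x) = x, pivot x != x &
   forall m, m != x.2 -> exists2 m', m' != (pivot x).2 &
      vertex (pivot x).1.1 (pivot x).1.2 m' = vertex x.1.1 x.1.2 m].
Proof.
case: x => [[v t] j]; rewrite /pivotable /=.
case: (j =P ord0) => [->|j0] /=.
  move=> /andP[vk _]; rewrite vk /= eqxx last_step_rotl.
  have -> : 0 < incr_at v (first_step t) (first_step t).
    by rewrite ffunE eqxx inordK; lia.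
  rewrite incr_atK // rotlK; split => //; last first.
    move=> m m0; exists (inord m.-1); last by rewrite vertex_rotl.
    by apply/eqP => /(congr1 val); rewrite /= inordK; have := ltn_ord m; lia.
  by apply/negP => /eqP /(congr1 (fun x : facet => (x.2 : nat))).
case: (j =P ord_max) => [->|jm] /=.
  move=> vk; rewrite vk /= first_step_rotr.
  have -> : decr_at v (last_step t) (last_step t) < k.
    by rewrite ffunE eqxx inordK; have := ltn_ord (v (last_step t)); lia.
  rewrite decr_atK // rotrK; split => //; last first.
    move=> m m0; exists (inord m.+1); last by rewrite vertex_rotr.
    apply/eqP => /(congr1 val); rewrite /= inordK; have := ltn_ord m;
      move/neq_val: m0 => /= m0; lia.
  by apply/negP => /eqP /(congr1 (fun x : facet => (x.2 : nat))).
move/eqP: j0 => j0; move/eqP: jm => jm.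
move=> _; rewrite (negbTE j0) (negbTE jm); split.
- by rewrite -mulgA tperm2 mulg1.
- apply/negP => /eqP [] /perm.permP /(_ ((t^-1)%g (inord j.-1))).
  rewrite permM permKV /adj_tperm tpermL => /(congr1 val).
  move/neq_val: j0; move/neq_val: jm => /= jm j0; have lj := ltn_ord j.
  rewrite !inordK; lia.
- by move=> m mj; exists m => //; rewrite vertex_mul_adj_tperm.
Qed.

Lemma bottom_facet_not_door (v : base) (t : perm_n) :
  (v (last_step t) : nat) = 0 -> (v, t, ord_max) \notin doors.
Proof.
move=> v0; apply/negP; rewrite inE => /is_doorP cov.
have [m mm hm] := cov (lift ord0 (last_step t)) (ltac:(by rewrite eq_sym neq_lift)).
move/neq_val: mm => /= mm.
have := lab_bottom (p := vertex v t m) (i := last_step t).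
rewrite /vlabel /= in hm; rewrite hm eqxx.
move=> h; suff hp : vertex v t m (last_step t) = 0 by move: (h hp).
rewrite ffunE v0 /last_step permKV /=.
by have := ltn_ord m; case: ltnP => //; lia.
Qed.

Definition top_base : base := [ffun=> ord_max].
Definition rev_perm : perm_n := perm (@rev_ord_inj n.+1).
Definition start : facet := (top_base, rev_perm, ord0).

Lemma start_door : start \in doors.
Proof.
rewrite inE; apply/is_doorP => c c0.
case: (unliftP ord0 c) => [i ->| e]; last by rewrite e eqxx in c0.
have li : @nat_of_ord n.+1 i < n.+1 := ltn_ord i.
exists (inord (n.+1 - i)).
  by apply/eqP => /(congr1 val); rewrite /= inordK; lia.
rewrite /vlabel /=; apply: lab_top.
  rewrite ffunE permE /= ffunE inordK; last by lia.
  by change (@nat_of_ord k.+1 ord_max) with k; lia.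
move=> i' lt; rewrite ffunE permE /= ffunE inordK; last by lia.
by change (@nat_of_ord k.+1 ord_max) with k; have := ltn_ord i'; lia.
Qed.

Lemma pivot_start : pivot start = start.
Proof. by rewrite /pivot /start /= ffunE /= ltnn. Qed.

Lemma top_label_first (p : grid) (a i : 'I_n.+1) : p a = k.+1 -> lab p = lift ord0 i ->
  p i = k.+1 /\ forall i' : 'I_n.+1, i' < i -> p i' != k.+1.
Proof.
move=> pa hl.
have [i0 /eqP h0 hmin] :=
  @arg_minnP _ a (fun i => p i == k.+1) (fun i : 'I_n.+1 => (i : nat)) (introT eqP pa).
have := lab_top (i := i0) h0; rewrite hl.
have mn : forall i' : 'I_n.+1, i' < i0 -> p i' != k.+1.
  by move=> i' lt; apply/negP => /hmin; lia.
by move=> /(_ mn) /lift_inj e; subst i0.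
Qed.

Lemma top_facet_door_start (v : base) (t : perm_n) :
  ~~ (v (first_step t) < k) -> (v, t, ord0) \in doors -> (v, t, ord0) = start.
Proof.
move=> vk; rewrite inE => /is_doorP cov.
have va : (v (first_step t) : nat) = k by have := ltn_ord (v (first_step t)); lia.
have top_vertex (i : 'I_n.+1) : exists m : 'I_n.+2, vertex v t m i = k.+1 /\
     forall i' : 'I_n.+1, i' < i -> vertex v t m i' != k.+1.
  have c0 : lift ord0 i != ord0 :> 'I_n.+2 by rewrite eq_sym neq_lift.
  have [m /neq_val /= m0 hm] := cov (lift ord0 i) c0.
  have pa : vertex v t m (first_step t) = k.+1.
    by rewrite ffunE va /first_step permKV /=; case: ltnP => //; lia.
  by have [h1 h2] := top_label_first pa hm; exists m.
have vK i : (v i : nat) = k.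
  have [m [h _]] := top_vertex i; move: h; rewrite ffunE.
  by have := ltn_ord (v i); case: ltnP; lia.
have -> : v = top_base by apply/ffunP => i; apply: val_inj; rewrite ffunE /= vK.
suff -> : t = rev_perm by [].
apply/perm.permP => i; rewrite permE; apply: perm_decr_rev => i1 i2 lt.
have [m [h1 h2]] := top_vertex i2; have := h2 _ lt; move: h1; rewrite !ffunE !vK.
by case: ltnP; case: ltnP; lia.
Qed.

Lemma door_pivotable (x : facet) : x \in doors -> x != start -> pivotable x.
Proof.
case: x => [[v t] j] xD xs; rewrite /pivotable /=; apply/andP; split;
  apply/implyP => /eqP ej; subst j.
  rewrite ltnNge; apply: contra xs => vk; apply/eqP.
  by apply: top_facet_door_start; rewrite // -ltnNge.
rewrite lt0n; apply: contraL xD => /eqP; exact: bottom_facet_not_door.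
Qed.

Lemma kuhn_fully_labelled :
  exists (v : base) (t : perm_n), forall c, exists m, lab (vertex v t m) = c.
Proof.
have [/existsP [[[v t] j] /forallP full] | none_full] :=
  boolP [exists x : facet, fully_labelled x].
  by exists v, t => c; have /existsP [m /eqP hm] := full c; exists m.
exfalso; move: none_full; rewrite negb_exists => /forallP none_full.
have even_doors : ~~ odd #|doors|.
  by apply: (involution_card_even (f := switch)) => x xD; apply: switch_involution.
have : ~~ odd #|doors :\ start|.
  apply: (involution_card_even (f := pivot)) => x; rewrite in_setD1 => /andP [xs xD].
  have [ppx px_neq shared] := pivot_involution (door_pivotable xD xs).
  rewrite in_setD1 (door_of_shared_facet xD shared) andbT; split => //.
  by apply: contra xs => /eqP e; rewrite -ppx e pivot_start.
by move: even_doors; rewrite (cardsD1 start doors) start_door /= => /negbTE ->.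
Qed.

End Kuhn.

Local Open Scope ring_scope.

(** * The Euclidean norm and the radial retraction *)

Lemma cauchy_schwarz_sum (R : realFieldType) (d : nat) (a b : 'I_d -> R) :
  (\sum_i a i * b i) ^+ 2 <= (\sum_i a i ^+ 2) * (\sum_i b i ^+ 2).
Proof.
set A := \sum_i a i ^+ 2; set B := \sum_i b i ^+ 2; set S := \sum_i a i * b i.
have A0 : 0 <= A by apply: sumr_ge0 => i _; apply: sqr_ge0.
have B0 : 0 <= B by apply: sumr_ge0 => i _; apply: sqr_ge0.
have [A_eq0|A_neq0] := eqVneq A 0.
  have a0 i : a i = 0.
    apply/eqP; rewrite -sqrf_eq0; apply/eqP.
    by apply: (psumr_eq0P (P := xpredT) _ A_eq0) => // j _; apply: sqr_ge0.
  have -> : S = 0 by rewrite /S big1 // => i _; rewrite a0 mul0r.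
  by rewrite expr0n /= mulr_ge0.
have A_gt0 : 0 < A by rewrite lt_def A_neq0 A0.
(* expand the nonnegative quantity [\sum_i (t a_i - b_i)^2] at [t = S / A] *)
set t := S / A.
have expand : \sum_i (t * a i - b i) ^+ 2 = t ^+ 2 * A - 2 * t * S + B.
  transitivity (\sum_i (t ^+ 2 * a i ^+ 2 - 2 * t * (a i * b i) + b i ^+ 2)).
    by apply: eq_bigr => i _; ring.
  by rewrite big_split /= sumrB -!mulr_sumr.
have : 0 <= B - S ^+ 2 / A.
  have -> : B - S ^+ 2 / A = \sum_i (t * a i - b i) ^+ 2.
    by rewrite expand /t; field; rewrite A_neq0.
  by apply: sumr_ge0 => i _; apply: sqr_ge0.
by rewrite subr_ge0 ler_pdivrMr // mulrC.
Qed.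

Section EuclideanNorm.
Context {R : realType} {d : nat}.
Implicit Types (u v : 'rV[R]_d).

Lemma enorm_ge0 v : 0 <= enorm v.
Proof. exact: sqrtr_ge0. Qed.

Lemma enorm_sqr v : enorm v ^+ 2 = \sum_i v ord0 i ^+ 2.
Proof. by rewrite /enorm sqr_sqrtr // sumr_ge0 // => i _; apply: sqr_ge0. Qed.

Lemma enorm0 : enorm (0 : 'rV[R]_d) = 0.
Proof. by rewrite /enorm big1 ?sqrtr0 // => i _; rewrite mxE expr0n. Qed.

Lemma enormZ (c : R) v : enorm (c *: v) = `|c| * enorm v.
Proof.
rewrite /enorm -sqrtr_sqr -sqrtrM ?sqr_ge0 // mulr_sumr; congr Num.sqrt.
by apply: eq_bigr => i _; rewrite mxE exprMn.
Qed.

Lemma enormN v : enorm (- v) = enorm v.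
Proof. by rewrite -scaleN1r enormZ normrN normr1 mul1r. Qed.

Lemma enorm_distC u v : enorm (u - v) = enorm (v - u).
Proof. by rewrite -opprB enormN. Qed.

Lemma ler_enormD u v : enorm (u + v) <= enorm u + enorm v.
Proof.
have uv_ge0 : 0 <= enorm u * enorm v by rewrite mulr_ge0 ?enorm_ge0.
rewrite -(ler_pXn2r (n := 2)) ?nnegrE ?addr_ge0 ?enorm_ge0 //.
set S := \sum_i u ord0 i * v ord0 i.
have -> : enorm (u + v) ^+ 2 = enorm u ^+ 2 + 2 * S + enorm v ^+ 2.
  rewrite !enorm_sqr /S mulr_sumr -!big_split /=; apply: eq_bigr => i _.
  by rewrite mxE; ring.
suff : S <= enorm u * enorm v by rewrite sqrrD; lra.
have [S_le0|S_gt0] := lerP S 0; first exact: le_trans S_le0 uv_ge0.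
rewrite -(ler_pXn2r (n := 2)) ?nnegrE ?(ltW S_gt0) //.
by rewrite exprMn !enorm_sqr cauchy_schwarz_sum.
Qed.

Lemma lerB_enorm_dist u v : enorm u - enorm v <= enorm (u - v).
Proof. by have := ler_enormD (u - v) v; rewrite subrK; lra. Qed.

Lemma enorm_coord v i : `|v ord0 i| <= enorm v.
Proof.
rewrite -(ler_pXn2r (n := 2)) ?nnegrE ?enorm_ge0 //.
rewrite enorm_sqr real_normK ?num_real // (bigD1 i) //= lerDl.
by apply: sumr_ge0 => j _; apply: sqr_ge0.
Qed.

Lemma enorm_le_box v (e : R) : 0 <= e -> (forall i, `|v ord0 i| <= e) ->
  enorm v <= d%:R * e.
Proof.
move=> e0 ve; rewrite -(ler_pXn2r (n := 2)) ?nnegrE ?enorm_ge0 ?mulr_ge0 //.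
apply: (@le_trans _ _ (\sum_(i < d) e ^+ 2)).
  rewrite enorm_sqr; apply: ler_sum => i _.
  by rewrite -real_normK ?num_real // ler_pXn2r ?nnegrE.
rewrite sumr_const card_ord exprMn -[X in X <= _]mulr_natl ler_wpM2r ?sqr_ge0 //.
by case: d {v ve} => [|m]; rewrite ?expr0n // -natrX ler_nat leq_pmulr.
Qed.

End EuclideanNorm.

Section Retraction.
Context {R : realType} {d : nat}.
Variable rho : R.
Hypothesis rho_ge0 : 0 <= rho.

Definition retract (z : 'rV[R]_d) : 'rV[R]_d :=
  if enorm z <= rho then z else (rho / enorm z) *: z.

Lemma enorm_retract z : enorm (retract z) <= rho.
Proof.
rewrite /retract; case: ifPn => // /negbTE; rewrite leNgt => /negbFE z_gt.
by rewrite enormZ ger0_norm ?divfK ?gt_eqF ?divr_ge0 ?enorm_ge0 // (le_lt_trans rho_ge0).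
Qed.

Lemma retract_id z : enorm z <= rho -> retract z = z.
Proof. by rewrite /retract => ->. Qed.

Lemma retract_lipschitz_in_out (a w : 'rV[R]_d) : enorm a <= rho -> rho < enorm w ->
  enorm (a - (rho / enorm w) *: w) <= 2 * enorm (a - w).
Proof.
move=> ha hw; have nw0 : 0 < enorm w := le_lt_trans rho_ge0 hw.
have -> : a - (rho / enorm w) *: w = (a - w) + (1 - rho / enorm w) *: w.
  by rewrite scalerBl scale1r addrA subrK.
apply: (le_trans (ler_enormD _ _)); rewrite enormZ.
have q : rho / enorm w <= 1 by rewrite ler_pdivrMr // mul1r; lra.
rewrite ger0_norm; last lra.
rewrite mulrBl mul1r divfK ?gt_eqF //.
by have := lerB_enorm_dist w a; rewrite enorm_distC; lra.
Qed.

Lemma retract_lipschitz_out_out (z w : 'rV[R]_d) : rho < enorm z -> rho < enorm w ->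
  enorm ((rho / enorm z) *: z - (rho / enorm w) *: w) <= 2 * enorm (z - w).
Proof.
move=> hz hw; have nz0 : 0 < enorm z := le_lt_trans rho_ge0 hz.
have nw0 : 0 < enorm w := le_lt_trans rho_ge0 hw.
move: hz hw nz0 nw0; set nz := enorm z; set nw := enorm w => hz hw nz0 nw0.
have q0 : 0 <= rho / nz by rewrite divr_ge0 ?(ltW nz0).
have q1 : rho / nz <= 1 by rewrite ler_pdivrMr // mul1r; lra.
have -> : (rho / nz) *: z - (rho / nw) *: w =
    (rho / nz) *: (z - w) + ((rho / nz) * (nw - nz) / nw) *: w.
  by apply/rowP => i; rewrite !mxE; field; rewrite !gt_eqF.
apply: (le_trans (ler_enormD _ _)); rewrite !enormZ -/nw.
rewrite (ger0_norm q0) normrM normrM (ger0_norm q0) normfV (gtr0_norm nw0) mulfVK ?gt_eqF //.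
have : `|nw - nz| <= enorm (z - w).
  rewrite ler_norml; have := lerB_enorm_dist w z; have := lerB_enorm_dist z w.
  by rewrite -/nz -/nw enorm_distC; lra.
have := enorm_ge0 (z - w); nra.
Qed.

Lemma retract_lipschitz : lipschitz_with 2 retract.
Proof.
move=> z w; rewrite /retract.
case: ifPn => hz; case: ifPn => hw; rewrite -?ltNge in hz hw.
- by have := enorm_ge0 (z - w); lra.
- exact: retract_lipschitz_in_out.
- by rewrite enorm_distC [enorm (z - w)]enorm_distC retract_lipschitz_in_out.
- exact: retract_lipschitz_out_out.
Qed.

End Retraction.

(** * Brouwer's fixed point theorem for Lipschitz maps *)

Section SpernerLabelling.
Variables (R : realType) (n : nat) (F : 'rV[R]_n.+1 -> 'rV[R]_n.+1).
Variables (c h : R) (k : nat).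

Definition grid_point (p : {ffun 'I_n.+1 -> nat}) : 'rV[R]_n.+1 :=
  \row_i (- c + (p i)%:R * h).

(* Label [i+1] means that [F] moves coordinate [i] down, label [0] that [F]
   moves no coordinate down; on the top faces the label is forced. *)
Definition sperner_label (p : {ffun 'I_n.+1 -> nat}) : 'I_n.+2 :=
  if [pick i | (p i == k.+1) && [forall i' : 'I_n.+1, (i' < i)%N ==> (p i' != k.+1)]]
    is Some i then lift ord0 i
  else if [pick i | F (grid_point p) ord0 i < grid_point p ord0 i]
    is Some i then lift ord0 i
  else ord0.

Lemma sperner_label_top (p : {ffun 'I_n.+1 -> nat}) i : p i = k.+1 ->
  (forall i' : 'I_n.+1, (i' < i)%N -> p i' != k.+1) -> sperner_label p = lift ord0 i.
Proof.
move=> pik first_i; rewrite /sperner_label.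
case: pickP => [i0 /andP[/eqP pi0k /forallP first_i0] | none].
  congr lift; apply/val_inj/eqP; rewrite eqn_leq; apply/andP; split.
    by rewrite leqNgt; apply/negP => lt; have := first_i0 i; rewrite lt /= pik eqxx.
  by rewrite leqNgt; apply/negP => lt; have := first_i i0 lt; rewrite pi0k eqxx.
exfalso; move: (none i); rewrite pik eqxx /= => /negP; apply; apply/forallP => i'.
exact/implyP/first_i.
Qed.

Lemma sperner_label_bottom (p : {ffun 'I_n.+1 -> nat}) i :
  (forall z, `|F z ord0 i| <= c) -> p i = 0%N -> sperner_label p != lift ord0 i.
Proof.
move=> F_le pi0; rewrite /sperner_label; case: pickP => [i0 /andP[/eqP pi0k _] | _].
  by apply/eqP => /lift_inj eii; subst i0; rewrite pi0 in pi0k.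
case: pickP => [i0 F_lt|_]; last by rewrite neq_lift.
apply/eqP => /lift_inj eii; subst i0; move: F_lt; rewrite !mxE pi0 mul0r addr0.
by have := F_le (grid_point p); rewrite ler_norml => /andP[]; lra.
Qed.

Lemma sperner_label0 (p : {ffun 'I_n.+1 -> nat}) : sperner_label p = ord0 ->
  forall i, grid_point p ord0 i <= F (grid_point p) ord0 i.
Proof.
rewrite /sperner_label.
case: pickP => [i0 _|_]; first by move/eqP; rewrite eq_sym (negbTE (neq_lift _ _)).
case: pickP => [i0 _|none _ i]; first by move/eqP; rewrite eq_sym (negbTE (neq_lift _ _)).
by rewrite leNgt none.
Qed.

Lemma sperner_label_lift (p : {ffun 'I_n.+1 -> nat}) i : sperner_label p = lift ord0 i ->
  p i = k.+1 \/ F (grid_point p) ord0 i < grid_point p ord0 i.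
Proof.
rewrite /sperner_label; case: pickP => [i0 /andP[/eqP pi0k _] /lift_inj <-|_]; first by left.
case: pickP => [i0 F_lt /lift_inj <-|_]; first by right.
by move/eqP; rewrite (negbTE (neq_lift _ _)).
Qed.

End SpernerLabelling.

(* On a fully labelled simplex of mesh [h], the vertex labelled [0] is an
   approximate fixed point: a vertex labelled [i+1] lies within [h] of it
   in every coordinate and has [F_i < x_i] or [x_i = c]. *)
Lemma fully_labelled_approx_fixed_point (R : realType) (n k : nat)
    (F : 'rV[R]_n.+1 -> 'rV[R]_n.+1) (rho Lam c h : R)
    (v : {ffun 'I_n.+1 -> 'I_k.+1}) (t : {perm 'I_n.+1}) :
  0 <= Lam -> 0 < h -> k.+1%:R * h = 2 * c -> rho <= c ->
  (forall z i, `|F z ord0 i| <= rho) ->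
  (forall (z w : 'rV[R]_n.+1) (e : R), 0 <= e -> (forall i, `|z ord0 i - w ord0 i| <= e) ->
     forall i, `|F z ord0 i - F w ord0 i| <= Lam * e) ->
  (forall l, exists m, sperner_label F c h k (vertex v t m) = l) ->
  exists z : 'rV[R]_n.+1, (forall i, `|z ord0 i| <= c) /\
     forall i, `|F z ord0 i - z ord0 i| <= (Lam + 1) * h.
Proof.
move=> Lam0 h0 c_h rho_c F_le F_lip full.
set pt := fun m => grid_point c h (vertex v t m).
have vertex_le m i : (vertex v t m i <= k.+1)%N.
  by rewrite ffunE; have := ltn_ord (v i); case: ltnP; lia.
have pt_le m i : `|pt m ord0 i| <= c.
  rewrite mxE ler_norml.
  have : 0 <= (vertex v t m i)%:R * h by rewrite mulr_ge0 ?(ltW h0).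
  have : (vertex v t m i)%:R * h <= k.+1%:R * h by rewrite ler_pM2r // ler_nat.
  lra.
have pt_close m m' i : `|pt m ord0 i - pt m' ord0 i| <= h.
  rewrite !mxE !ffunE !natrD.
  have -> : - c + ((v i)%:R + (nat_of_bool (t i < m)%N)%:R) * h -
    (- c + ((v i)%:R + (nat_of_bool (t i < m')%N)%:R) * h) =
    ((nat_of_bool (t i < m)%N)%:R - (nat_of_bool (t i < m')%N)%:R) * h by ring.
  rewrite normrM (gtr0_norm h0) ler_piMl ?(ltW h0) //.
  by case: ltnP => _; case: ltnP => _; rewrite /= ?subrr ?normr0 ?subr0 ?sub0r ?normrN ?normr1.
have [m0 /sperner_label0 F_ge] := full ord0.
exists (pt m0); split => // i.
have [mi /sperner_label_lift lab_i] := full (lift ord0 i).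
have := F_lip _ _ _ (ltW h0) (pt_close m0 mi) i.
have := pt_close m0 mi i; have := F_ge i; have := F_le (pt m0) i.
rewrite !ler_norml => /andP[_ ?] ? /andP[? ?] /andP[? ?].
have : h <= (Lam + 1) * h by rewrite ler_peMl //; lra.
case: lab_i => [top|?]; last by lra.
have : pt mi ord0 i = c by rewrite /pt mxE top c_h; lra.
lra.
Qed.

Lemma approx_fixed_point (R : realType) (n : nat) (F : 'rV[R]_n.+1 -> 'rV[R]_n.+1)
    (rho Lam : R) :
  0 <= rho -> 0 <= Lam -> (forall z i, `|F z ord0 i| <= rho) ->
  (forall (z w : 'rV[R]_n.+1) (e : R), 0 <= e -> (forall i, `|z ord0 i - w ord0 i| <= e) ->
     forall i, `|F z ord0 i - F w ord0 i| <= Lam * e) ->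
  forall e : R, 0 < e -> exists z : 'rV[R]_n.+1,
    (forall i, `|z ord0 i| <= rho + 1) /\ forall i, `|F z ord0 i - z ord0 i| <= e.
Proof.
move=> rho0 Lam0 F_le F_lip e e0.
set c := rho + 1.
(* a grid of [k+1] steps of length [h = 2c/(k+1)] on [-c, c], with [(Lam+1) h <= e] *)
set B := 2 * c * (Lam + 1) / e.
have B0 : 0 <= B by rewrite /B /c divr_ge0 ?mulr_ge0 //; lra.
set k := Num.bound B.
have kB : B < k.+1%:R by apply: (lt_le_trans (archi_boundP B0)); rewrite ler_nat.
set h : R := 2 * c / k.+1%:R.
have k0 : 0 < k.+1%:R :> R by rewrite ltr0n.
have h0 : 0 < h by rewrite /h /c divr_gt0 //; lra.
have c_h : k.+1%:R * h = 2 * c by rewrite /h mulrC divfK ?gt_eqF.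
have he : (Lam + 1) * h <= e.
  move: kB; rewrite /h /B ltr_pdivrMr // => kB.
  rewrite mulrA ler_pdivrMr //; lra.
have rho_c : rho <= c by rewrite /c; lra.
have lab_bottom (p : {ffun 'I_n.+1 -> nat}) i : p i = 0%N -> sperner_label F c h k p != lift ord0 i.
  by apply: sperner_label_bottom => z; apply: le_trans (F_le z i) rho_c.
have [v [t full]] := kuhn_fully_labelled lab_bottom (@sperner_label_top _ _ F c h k).
have [z [zc zF]] := fully_labelled_approx_fixed_point Lam0 h0 c_h rho_c F_le F_lip full.
by exists z; split => // i; apply: le_trans (zF i) he.
Qed.

Lemma fixed_point_of_approx (R : realType) (n : nat) (F : 'rV[R]_n -> 'rV[R]_n) (c Lam : R) :
  (forall (z w : 'rV[R]_n) (e : R), 0 <= e -> (forall i, `|z ord0 i - w ord0 i| <= e) ->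
     forall i, `|F z ord0 i - F w ord0 i| <= Lam * e) ->
  (forall e : R, 0 < e -> exists z : 'rV[R]_n,
     (forall i, `|z ord0 i| <= c) /\ forall i, `|F z ord0 i - z ord0 i| <= e) ->
  exists z, F z = z.
Proof.
move=> F_lip approx.
pose K := [set v : 'rV[R]_n | forall i, `[-c, c]%classic (v ord0 i)]%classic.
have K_compact : compact K.
  exact: (@rV_compact R n (fun=> `[-c, c]%classic) (fun=> @segment_compact R (-c) c)).
pose approx_in e := [set z | K z /\ forall i, `|F z ord0 i - z ord0 i| <= e]%classic.
pose G := filter_from [set e : R | 0 < e]%classic approx_in.
have G_filter : ProperFilter G.
  apply: filter_from_proper; last first.
    move=> e /= e0; have [z [zc zF]] := approx e e0; exists z; split => // i.
    by rewrite /= in_itv /= -ler_norml.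
  apply: filter_from_filter; first by exists 1%R => /=.
  move=> e1 e2 /= e1_gt0 e2_gt0; exists (Num.min e1 e2); first by rewrite /= lt_min e1_gt0.
  by move=> z [Kz zF]; split; split => // i; rewrite (le_trans (zF i)) // ge_min lexx ?orbT.
have GK : G K by exists 1 => //= z [].
have [z [Kz z_cluster]] := K_compact G G_filter GK.
exists z; apply/rowP => j; apply/eqP; rewrite -subr_eq0 -normr_le0.
apply/ler_addgt0Pl => e e0; rewrite addr0.
set C := `|Lam| + 2.
have C0 : 0 < C by rewrite /C ltr_pwDr ?normr_ge0.
have eC0 : 0 < e / C by apply: divr_gt0.
have [w [[Kw wF] [_ zw]]] := z_cluster _ _
  (@in_filter_from _ _ [set e : R | 0 < e]%classic approx_in _ eC0)
  (nbhsx_ballx z (e / C) eC0).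
have zw_le i : `|z ord0 i - w ord0 i| <= e / C by apply: ltW; have := zw ord0 i.
have F_zw := F_lip z w (e / C) (ltW eC0) zw_le j.
have -> : F z 0 j - z 0 j =
    (F z ord0 j - F w ord0 j) + (F w ord0 j - w ord0 j) - (z ord0 j - w ord0 j) by ring.
rewrite (le_trans (ler_normB _ _)) // (le_trans (lerD (ler_normD _ _) (lexx _))) //.
have -> : e = `|Lam| * (e / C) + 2 * (e / C) by rewrite -mulrDl mulrC divfK ?gt_eqF.
have : Lam * (e / C) <= `|Lam| * (e / C) by rewrite ler_pM2r // ler_norm.
by have := wF j; have := zw_le j; lra.
Qed.

Lemma lipschitz_fixed_point_cube (R : realType) (n : nat) (F : 'rV[R]_n -> 'rV[R]_n)
    (rho Lam : R) :
  0 <= rho -> 0 <= Lam -> (forall z i, `|F z ord0 i| <= rho) ->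
  (forall (z w : 'rV[R]_n) (e : R), 0 <= e -> (forall i, `|z ord0 i - w ord0 i| <= e) ->
     forall i, `|F z ord0 i - F w ord0 i| <= Lam * e) ->
  exists z, F z = z.
Proof.
case: n F => [|n] F rho0 Lam0 F_le F_lip; first by exists 0; apply/rowP => -[].
exact: fixed_point_of_approx F_lip (approx_fixed_point rho0 Lam0 F_le F_lip).
Qed.

Lemma lipschitz_fixed_point (R : realType) (d : nat) (F : 'rV[R]_d -> 'rV[R]_d) (rho L : R) :
  0 <= L -> (forall z, enorm (F z) <= rho) -> lipschitz_with L F -> exists z, F z = z.
Proof.
move=> L_ge0 F_le F_lip.
have rho_ge0 : 0 <= rho := le_trans (enorm_ge0 _) (F_le 0).
apply: (@lipschitz_fixed_point_cube R d F rho (L * d%:R) rho_ge0).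
- by rewrite mulr_ge0.
- by move=> z i; apply: le_trans (enorm_coord _ i) (F_le z).
move=> z w e e_ge0 zw_le i.
have := enorm_coord (F z - F w) i; rewrite !mxE => /le_trans; apply.
apply: le_trans (F_lip z w) _; rewrite -mulrA ler_wpM2l //.
by apply: enorm_le_box => // j; rewrite !mxE.
Qed.

(** * Perturbations of [z |-> b z] *)

Lemma lipschitz_comp (R : realType) (d : nat) (f g : 'rV[R]_d -> 'rV[R]_d) (Lf Lg : R) :
  0 <= Lf -> lipschitz_with Lf f -> lipschitz_with Lg g -> lipschitz_with (Lf * Lg) (f \o g).
Proof.
by move=> Lf_ge0 f_lip g_lip z w; rewrite -mulrA (le_trans (f_lip _ _)) // ler_wpM2l.
Qed.

Lemma lipschitz_scale_add (R : realType) (d : nat) (b L : R) (h : 'rV[R]_d -> 'rV[R]_d) :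
  lipschitz_with L h -> lipschitz_with (`|b| + L) (fun z => b *: z + h z).
Proof.
move=> h_lip z1 z2.
have -> : b *: z1 + h z1 - (b *: z2 + h z2) = b *: (z1 - z2) + (h z1 - h z2).
  by rewrite scalerBr opprD addrACA.
by rewrite mulrDl (le_trans (ler_enormD _ _)) // enormZ lerD2l h_lip.
Qed.

Lemma scale_add_onto (R : realType) (d : nat) (b L C0 C1 : R) (h : 'rV[R]_d -> 'rV[R]_d) :
  0 <= L -> lipschitz_with L h ->
  0 <= C1 -> (forall z, enorm (h z) <= C0 + C1 * enorm z) -> C1 < `|b| ->
  forall y, exists z, enorm z <= (enorm y + C0) / (`|b| - C1) /\ b *: z + h z = y.
Proof.
move=> L_ge0 h_lip C1_ge0 h_growth C1_lt y.
have b_gt0 : 0 < `|b| := le_lt_trans C1_ge0 C1_lt.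
have bC1_gt0 : 0 < `|b| - C1 by rewrite subr_gt0.
have C0_ge0 : 0 <= C0.
  by have := h_growth 0; rewrite enorm0 mulr0 addr0; apply: le_trans (enorm_ge0 _).
set rho := (enorm y + C0) / (`|b| - C1).
have rho_ge0 : 0 <= rho by apply: divr_ge0; [rewrite addr_ge0 ?enorm_ge0 | exact: ltW].
have rho_eq : enorm y + C0 + C1 * rho = `|b| * rho.
  by rewrite /rho; field; rewrite gt_eqF.
(* the solutions of [b z + h z = y] are the fixed points of [T] *)
pose T w := b^-1 *: (y - h w).
have T_ball w : enorm w <= rho -> enorm (T w) <= rho.
  move=> w_le; rewrite /T enormZ normfV ler_pdivrMl //.
  have := ler_enormD y (- h w); rewrite enormN.
  have := h_growth w; have : C1 * enorm w <= C1 * rho by rewrite ler_wpM2l.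
  lra.
have T_lip : lipschitz_with (`|b|^-1 * L) T.
  move=> w1 w2; rewrite /T -scalerBr enormZ normfV -mulrA.
  apply: ler_wpM2l; first by rewrite invr_ge0 ltW.
  by rewrite opprB addrC subrKA [enorm (w1 - w2)]enorm_distC; apply: h_lip.
have [z Tz] : exists z, (T \o retract rho) z = z.
  apply: (@lipschitz_fixed_point _ _ _ rho (`|b|^-1 * L * 2)).
  - by rewrite !mulr_ge0 // invr_ge0 ltW.
  - by move=> z; apply/T_ball/enorm_retract.
  - apply: (lipschitz_comp _ T_lip (retract_lipschitz rho_ge0)).
    by rewrite mulr_ge0 // invr_ge0 ltW.
have z_le : enorm z <= rho by rewrite -Tz; apply/T_ball/enorm_retract.
move: Tz; rewrite /= retract_id // => Tz.
exists z; split => //.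
by rewrite -{1}Tz /T scalerA mulfV ?scale1r ?subrK // -normr_gt0.
Qed.

Theorem proposition11 (R : realType) (d : nat)
  (g : 'rV[R]_d -> 'rV[R]_d -> 'rV[R]_d) (Rad : R) (hRad : 0 < Rad)
  (hlip : exists LgR : R, 0 <= LgR /\
     forall x z1 z2 : 'rV[R]_d, enorm x <= Rad ->
       enorm (g x z1 - g x z2) <= LgR * enorm (z1 - z2))
  (C0 C1 : R) (hC0 : 0 <= C0) (hC1 : 0 <= C1)
  (hgrowth : forall x z : 'rV[R]_d, enorm x <= Rad ->
       enorm (g x z) <= C0 + C1 * enorm z)
  (b : R) (hb : C1 < `|b|) :
  forall M : R, 0 < M ->
    let Mt := (M + C0) / (`|b| - C1) in
    (exists L : R, 0 <= L /\
       forall x, eball 0 Rad x -> lipschitz_with L (fg b g x)) /\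
    (forall x, eball 0 Rad x ->
       forall y, eball 0 M y -> exists z, eball 0 Mt z /\ fg b g x z = y).
Proof.
move=> M M_gt0 Mt; have [L [L_ge0 g_lip]] := hlip.
have ball_le x : eball 0 Rad x -> enorm x <= Rad by rewrite /eball subr0 => /ltW.
split.
  exists (`|b| + L); split; first by rewrite addr_ge0 ?normr_ge0.
  by move=> x /ball_le x_le; apply: lipschitz_scale_add => z1 z2; apply: g_lip.
move=> x /ball_le x_le y; rewrite /eball subr0 => y_lt.
have [z [z_le fz]] :=
  scale_add_onto L_ge0 (fun z1 z2 => g_lip x z1 z2 x_le) hC1 (fun z => hgrowth x z x_le) hb y.
exists z; split => //; rewrite /eball subr0 (le_lt_trans z_le) // /Mt.
by rewrite ltr_pM2r ?invr_gt0 ?subr_gt0 // ltrD2r.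
Qed.
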